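(* Let $X$ be a hyperbolic approximation of a metric space $Z$, with vertex set $V$. If $v,v'\in V$ are not joined by a radial geodesic, then any branch point of $\{v,v'\}$ is a splitting point.
   Context: Hyperbolic approximation: let $(Z,d)$ be a metric space and fix $r$ with $0<r\le1/6$. For every $k\in\mathbb{Z}$ choose a maximal $r^k$-separated set $V_k\subset Z$ (distinct points at distance $\ge r^k$, maximal with this property). For $v\in V_k$ let $B(v)$ be the ball in $Z$ of radius $2r^k$ centred at $v$, $\bar B(v)$ the closed ball. The vertex set $V$ consists, for each $k$, of the balls $B(v)$, $v\in V_k$ (equal balls from the same level give the same vertex; equal balls at different levels are different vertices); a vertex from level $k$ has level $l(v)=k$, and we write $V_k$ also for the set of vertices of level $k$. Two vertices are joined by an edge iff they are on the same level and their closed balls intersect (horizontal edge), or they are on neighbouring levels $k,k+1$ and the ball of the level-$(k+1)$ vertex is contained in the ball of the level-$k$ vertex (radial edge). $X$ carries the path metric with all edges of length $1$. A radial geodesic is an edge path all of whose edges are radial and along which the level function is monotone. For $V'\subset V$, a vertex $u$ is a cone point of $V'$ if $l(u)\le\inf_{v\in V'}l(v)$ and every $v\in V'$ is connected to $u$ by a radial geodesic; a branch point of $V'$ is a cone point of maximal level. A vertex $v_k\in V_k$ is a splitting point if there is $v_{k+1}\in V_{k+1}$ with $B(v_{k+1})\subsetneq B(v_k)$. *)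

From Stdlib Require Import Reals ZArith.
Open Scope R_scope.
Set Implicit Arguments.

Definition is_metric {T : Type} (d : T -> T -> R) : Prop :=
  (forall x y, 0 <= d x y) /\
  (forall x y, d x y = 0 <-> x = y) /\
  (forall x y, d x y = d y x) /\
  (forall x y z, d x z <= d x y + d y z).

Definition separated {T : Type} (d : T -> T -> R) (eps : R) (S : T -> Prop) : Prop :=
  forall x y, S x -> S y -> x <> y -> eps <= d x y.

Definition maximal_separated {T : Type} (d : T -> T -> R) (eps : R) (S : T -> Prop) : Prop :=
  separated d eps S /\
  forall S' : T -> Prop, separated d eps S' -> (forall x, S x -> S' x) ->
    forall x, S' x -> S x.

Definition open_ball {T : Type} (d : T -> T -> R) (c : T) (rad : R) : T -> Prop :=
  fun x => d c x < rad.

Definition subset {T : Type} (A B : T -> Prop) : Prop := forall x, A x -> B x.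

(* A (candidate) vertex: a level k and a ball (a subset of T).  Equal balls at
   the same level are the same vertex; equal balls at different levels are
   different vertices. *)
Record vertex (T : Type) := mkVertex { lvl : Z ; vball : T -> Prop }.
Arguments mkVertex {T}.
Arguments lvl {T}.
Arguments vball {T}.

Section HypApprox.
Context {T : Type} (d : T -> T -> R) (r : R) (Vc : Z -> T -> Prop).

Definition is_vertex (u : vertex T) : Prop :=
  exists c, Vc (lvl u) c /\ vball u = open_ball d c (2 * powerRZ r (lvl u)).

Definition radial_edge (u w : vertex T) : Prop :=
  is_vertex u /\ is_vertex w /\
  ((lvl w = lvl u + 1 /\ subset (vball w) (vball u))%Z \/
   (lvl u = lvl w + 1 /\ subset (vball u) (vball w))%Z).

Definition radial_geodesic_between (u w : vertex T) : Prop :=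
  is_vertex u /\ is_vertex w /\
  exists (n : nat) (f : nat -> vertex T),
    f O = u /\ f n = w /\
    (forall i, (i < n)%nat -> radial_edge (f i) (f (S i))) /\
    ((forall i, (i < n)%nat -> (lvl (f i) <= lvl (f (S i)))%Z) \/
     (forall i, (i < n)%nat -> (lvl (f (S i)) <= lvl (f i))%Z)).

Definition cone_point (V' : vertex T -> Prop) (u : vertex T) : Prop :=
  is_vertex u /\
  (forall v, V' v -> (lvl u <= lvl v)%Z) /\
  (forall v, V' v -> radial_geodesic_between v u).

Definition branch_point (V' : vertex T -> Prop) (u : vertex T) : Prop :=
  cone_point V' u /\ forall u', cone_point V' u' -> (lvl u' <= lvl u)%Z.

Definition splitting_point (u : vertex T) : Prop :=
  is_vertex u /\
  exists w, is_vertex w /\ lvl w = (lvl u + 1)%Z /\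
    subset (vball w) (vball u) /\ vball w <> vball u.

End HypApprox.

(* Every cone point of {v, v'} lies below both vertices, and since neither
   vertex lies on a radial geodesic through the other, both geodesics to a
   branch point u have a last step, from a vertex w (resp. w') of level
   l(u) + 1 with B(w) ⊆ B(u).  If u were not a splitting point, then
   B(w) = B(u) = B(w'), so w = w' would be a cone point of {v, v'} of level
   l(u) + 1, contradicting the maximality of l(u). *)
From Stdlib Require Import Reals ZArith Lia Classical.
Open Scope R_scope.

Lemma vertex_ext {T : Type} (a b : vertex T) :
  lvl a = lvl b -> vball a = vball b -> a = b.
Proof. destruct a, b; simpl; intros -> ->; reflexivity. Qed.

Section RadialGeodesics.
Context {T : Type} {d : T -> T -> R} {r : R} {Vc : Z -> T -> Prop}.

Lemma radial_edge_sym {a b : vertex T} :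
  radial_edge d r Vc a b -> radial_edge d r Vc b a.
Proof. intros [Ha [Hb [E | E]]]; repeat split; tauto. Qed.

Lemma radial_edge_lvl {a b : vertex T} :
  radial_edge d r Vc a b -> (lvl b = lvl a + 1 \/ lvl a = lvl b + 1)%Z.
Proof. intros [_ [_ [[E _] | [E _]]]]; lia. Qed.

Lemma radial_path_lvl_incr {n : nat} {f : nat -> vertex T} :
  (forall i, (i < n)%nat -> radial_edge d r Vc (f i) (f (S i))) ->
  (forall i, (i < n)%nat -> (lvl (f i) <= lvl (f (S i)))%Z) ->
  forall i, (i <= n)%nat -> lvl (f i) = (lvl (f O) + Z.of_nat i)%Z.
Proof.
  intros He Hm i; induction i as [|i IH]; intros Hi; [simpl; lia|].
  pose proof (radial_edge_lvl (He i ltac:(lia))).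
  specialize (Hm i ltac:(lia)); specialize (IH ltac:(lia)); lia.
Qed.

Lemma radial_path_lvl_decr {n : nat} {f : nat -> vertex T} :
  (forall i, (i < n)%nat -> radial_edge d r Vc (f i) (f (S i))) ->
  (forall i, (i < n)%nat -> (lvl (f (S i)) <= lvl (f i))%Z) ->
  forall i, (i <= n)%nat -> lvl (f i) = (lvl (f O) - Z.of_nat i)%Z.
Proof.
  intros He Hm i; induction i as [|i IH]; intros Hi; [simpl; lia|].
  pose proof (radial_edge_lvl (He i ltac:(lia))).
  specialize (Hm i ltac:(lia)); specialize (IH ltac:(lia)); lia.
Qed.

Lemma radial_geodesic_sym (x y : vertex T) :
  radial_geodesic_between d r Vc x y -> radial_geodesic_between d r Vc y x.
Proof.
  intros [Hx [Hy [n [f [H0 [Hn [He Hm]]]]]]].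
  split; [exact Hy | split; [exact Hx |]].
  exists n, (fun i => f (n - i)%nat); cbv beta.
  split; [now rewrite Nat.sub_0_r |].
  split; [now rewrite Nat.sub_diag |].
  split.
  - intros i Hi; apply radial_edge_sym.
    replace (n - i)%nat with (S (n - S i)) by lia; apply He; lia.
  - destruct Hm as [Hm | Hm]; [right | left]; intros i Hi;
      replace (n - i)%nat with (S (n - S i)) by lia; apply Hm; lia.
Qed.

Lemma radial_geodesic_last_step {x u : vertex T} :
  radial_geodesic_between d r Vc x u -> (lvl u <= lvl x)%Z ->
  x = u \/
  exists w, radial_geodesic_between d r Vc x w /\
    lvl w = (lvl u + 1)%Z /\ subset (vball w) (vball u) /\ (lvl w <= lvl x)%Z.
Proof.
  intros [Hx [Hu [n [f [H0 [Hn [He Hm]]]]]]] Hle; subst x u.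
  destruct n as [|m]; [now left |]; right.
  destruct Hm as [Hm | Hm].
  - pose proof (radial_path_lvl_incr He Hm (S m) ltac:(lia)); lia.
  - pose proof (radial_path_lvl_decr He Hm (S m) ltac:(lia)).
    pose proof (radial_path_lvl_decr He Hm m ltac:(lia)).
    destruct (He m ltac:(lia)) as [Hfm [_ [[E _] | [E Hsub]]]]; [lia |].
    exists (f m); repeat split; [exact Hx | exact Hfm | | lia | exact Hsub | lia].
    exists m, f; split; [reflexivity | split; [reflexivity | split]].
    + intros i Hi; apply He; lia.
    + right; intros i Hi; apply Hm; lia.
Qed.

End RadialGeodesics.

Theorem lemma3p4 (T : Type) (d : T -> T -> R) (r : R) (Vc : Z -> T -> Prop)
  (hd : is_metric d) (hr : 0 < r <= 1/6)
  (hV : forall k : Z, maximal_separated d (powerRZ r k) (Vc k))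
  (v v' : vertex T) (hv : is_vertex d r Vc v) (hv' : is_vertex d r Vc v')
  (hnot : ~ radial_geodesic_between d r Vc v v')
  (u : vertex T) (hu : branch_point d r Vc (fun w => w = v \/ w = v') u) :
  splitting_point d r Vc u.
Proof.
  destruct hu as [[Hu [Hlvl Hgeo]] Hmax].
  pose proof (Hlvl v (or_introl eq_refl)) as Lv.
  pose proof (Hlvl v' (or_intror eq_refl)) as Lv'.
  destruct (radial_geodesic_last_step (Hgeo v (or_introl eq_refl)) Lv)
    as [-> | [w [Gw [Lw [Sw Lwv]]]]].
  { contradict hnot; apply radial_geodesic_sym, Hgeo; now right. }
  destruct (radial_geodesic_last_step (Hgeo v' (or_intror eq_refl)) Lv')
    as [-> | [w' [Gw' [Lw' [Sw' Lwv']]]]].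
  { contradict hnot; apply Hgeo; now left. }
  destruct (classic (vball w = vball u)) as [Bw | Bw];
    [| split; [exact Hu | exists w; destruct Gw as [_ [Hw _]]; tauto]].
  destruct (classic (vball w' = vball u)) as [Bw' | Bw'];
    [| split; [exact Hu | exists w'; destruct Gw' as [_ [Hw' _]]; tauto]].
  assert (Ew : w' = w) by (apply vertex_ext; congruence); subst w'.
  assert (Cw : cone_point d r Vc (fun x => x = v \/ x = v') w).
  { split; [now destruct Gw as [_ [Hw _]] |].
    split; intros x [-> | ->]; auto; lia. }
  specialize (Hmax w Cw); lia.
Qed.
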